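(* Let $A$ be an $m\times n$ matrix with entries in $[0,1]$ and no zero column, let $\epsilon>0$, $\alpha>0$, and run DIMSUM on $A$ with parameter $\gamma\ge \alpha/\epsilon$, producing $B$. Then for any two columns $c_i,c_j$ with $\cos(c_i,c_j)\ge\epsilon$ and any $\delta>0$, $$\Pr\left[\|c_i\|\|c_j\|\,b_{ij}>(1+\delta)[A^TA]_{ij}\right]\le\left(\frac{e^{\delta}}{(1+\delta)^{1+\delta}}\right)^{\alpha},$$ and for any $\delta\in(0,1)$, $$\Pr\left[\|c_i\|\|c_j\|\,b_{ij}<(1-\delta)[A^TA]_{ij}\right]<\exp(-\alpha\delta^2/2).$$
   Context: Let $A=(a_{ki})$ be an $m\times n$ real matrix with rows $r_1,\dots,r_m$ and columns $c_1,\dots,c_n$; $\|c_i\|$ is the Euclidean norm of column $i$ (assumed nonzero), and $\cos(c_i,c_j)=\frac{c_i^Tc_j}{\|c_i\|\|c_j\|}$. DIMSUM with parameter $\gamma>0$ is the following randomized procedure. For each pair of column indices $(i,j)$ set $p_{ij}=\min\!\left(1,\frac{\gamma}{\|c_i\|\|c_j\|}\right)$. For each row $k$ and each pair $(i,j)$ with $a_{ki}a_{kj}\neq 0$, independently (over all $k$ and all pairs) with probability $p_{ij}$ the value $a_{ki}a_{kj}$ is emitted to key $(i,j)$ (one ''emission''); equivalently let $X_{ijk}$ equal $a_{ki}a_{kj}$ with probability $p_{ij}$ and $0$ otherwise. The output is the $n\times n$ matrix $B$ with $b_{ij}=\frac{1}{\gamma}\sum_{k=1}^m X_{ijk}$ if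 $\frac{\gamma}{\|c_i\|\|c_j\|}\le 1$, and $b_{ij}=\frac{1}{\|c_i\|\|c_j\|}\sum_{k=1}^m X_{ijk}$ otherwise. *)

From mathcomp Require Import all_boot.
From Stdlib Require Import Reals.
Set Implicit Arguments. Unset Strict Implicit. Unset Printing Implicit Defensive.
Local Open Scope R_scope.

Definition Rltb (x y : R) : bool := if Rlt_dec x y then true else false.

(* A is an m x n real matrix, A k i = a_{ki} (row k, column i) *)
Definition colnorm (m n : nat) (A : 'I_m -> 'I_n -> R) (i : 'I_n) : R :=
  sqrt (\big[Rplus/0]_(k < m) (A k i * A k i)).

Definition gram (m n : nat) (A : 'I_m -> 'I_n -> R) (i j : 'I_n) : R :=
  \big[Rplus/0]_(k < m) (A k i * A k j).

Definition cosc (m n : nat) (A : 'I_m -> 'I_n -> R) (i j : 'I_n) : R :=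
  gram A i j / (colnorm A i * colnorm A j).

Definition pij (m n : nat) (A : 'I_m -> 'I_n -> R) (gamma : R) (i j : 'I_n) : R :=
  Rmin 1 (gamma / (colnorm A i * colnorm A j)).

(* Sample space of DIMSUM: one independent coin per (row k, pair (i,j)). *)
Definition outcome (m n : nat) := {ffun 'I_m * 'I_n * 'I_n -> bool}.

Definition weight (m n : nat) (A : 'I_m -> 'I_n -> R) (gamma : R)
  (w : outcome m n) : R :=
  \big[Rmult/1]_(t : 'I_m * 'I_n * 'I_n)
     (if w t then pij A gamma t.1.2 t.2 else 1 - pij A gamma t.1.2 t.2).

Definition Xv (m n : nat) (A : 'I_m -> 'I_n -> R) (w : outcome m n)
  (i j : 'I_n) (k : 'I_m) : R :=
  if w (k, i, j) then A k i * A k j else 0.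

Definition dimsum_b (m n : nat) (A : 'I_m -> 'I_n -> R) (gamma : R)
  (w : outcome m n) (i j : 'I_n) : R :=
  let s := \big[Rplus/0]_(k < m) Xv A w i j k in
  if Rle_dec (gamma / (colnorm A i * colnorm A j)) 1 then s / gamma
  else s / (colnorm A i * colnorm A j).

Definition Pr (m n : nat) (A : 'I_m -> 'I_n -> R) (gamma : R)
  (E : outcome m n -> bool) : R :=
  \big[Rplus/0]_(w : outcome m n | E w) weight A gamma w.

From HB Require Import structures.
From mathcomp Require Import all_boot.
From Stdlib Require Import Reals Lra.
From Coquelicot Require Import Coquelicot.
Local Open Scope R_scope.

(* Fix the column pair (i, j) and let p = p_ij.  The
   rescaled output ||c_i|| ||c_j|| b_ij equals S / p, where
   S = sum_k X_ijk is a sum of independent [0,1]-bounded variables with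
   mean mu = p [A^T A]_ij.  Two cases:
   - if p = 1 every coin for (i, j) lands heads almost surely, so S equals
     [A^T A]_ij with probability one and both deviation events are null;
   - otherwise p = gamma / (||c_i|| ||c_j||), hence mu = gamma cos(c_i, c_j)
     >= (alpha / eps) eps = alpha, and the multiplicative Chernoff bounds
     for S, whose exponents are negative multiples of mu, are at most the
     same expressions with mu replaced by alpha. *)

Lemma Rplus_associative : associative Rplus.
Proof. by move=> x y z; rewrite Rplus_assoc. Qed.
Lemma Rmult_associative : associative Rmult.
Proof. by move=> x y z; rewrite Rmult_assoc. Qed.
HB.instance Definition _ :=
  Monoid.isComLaw.Build R 0 Rplus Rplus_associative Rplus_comm Rplus_0_l.
HB.instance Definition _ :=
  Monoid.isComLaw.Build R 1 Rmult Rmult_associative Rmult_comm Rmult_1_l.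
HB.instance Definition _ := Monoid.isMulLaw.Build R 0 Rmult Rmult_0_l Rmult_0_r.
HB.instance Definition _ :=
  Monoid.isAddLaw.Build R Rmult Rplus Rmult_plus_distr_r Rmult_plus_distr_l.

Lemma exp_le_exp x y : x <= y -> exp x <= exp y.
Proof. by move=> [lt_xy | ->]; [left; exact: exp_increasing | right]. Qed.

(* Convexity of y |-> exp (t y) on [0, 1]: the graph lies below its chord.
   This bounds the moment generating function of a [0,1]-valued variable. *)
Lemma exp_le_chord t x : 0 <= x <= 1 -> exp (t * x) <= 1 + x * (exp t - 1).
Proof.
move=> hx.
have deriv c : derivable_pt_lim (fun y => exp (t * y)) c (t * exp (t * c)).
  by apply is_derive_Reals; auto_derive; [done | simpl; field].
have [-> | x_neq0] := Req_dec x 0; first by rewrite Rmult_0_r exp_0; lra.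
have [-> | x_neq1] := Req_dec x 1; first by rewrite Rmult_1_r; lra.
(* slopes of the two secants over [0, x] and [x, 1] *)
have [c1 [slope1 hc1]] := MVT_cor2 _ _ 0 x ltac:(lra) (fun c _ => deriv c).
have [c2 [slope2 hc2]] := MVT_cor2 _ _ x 1 ltac:(lra) (fun c _ => deriv c).
rewrite /= Rmult_0_r exp_0 Rmult_1_r in slope1 slope2.
have slope_mono : t * exp (t * c1) <= t * exp (t * c2).
  have [t_ge0 | t_lt0] := Rle_dec 0 t.
    by apply: Rmult_le_compat_l => //; apply: exp_le_exp; nra.
  by apply: Rmult_le_compat_neg_l; [lra | apply: exp_le_exp; nra].
have : 0 <= x * (1 - x) * (t * exp (t * c2) - t * exp (t * c1)).
  by apply: Rmult_le_pos; nra.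
nra.
Qed.

(* Second-order Taylor bound for exp (-d), strict for d > 0; it gives the
   Gaussian-type exponent of the lower tail. *)
Lemma exp_opp_lt_taylor2 d : 0 < d -> exp (- d) < 1 - d + d ^ 2 / 2.
Proof.
move=> d_gt0.
have deriv c : derivable_pt_lim (fun y => 1 - y + y ^ 2 / 2 - exp (- y)) c
                 (-1 + c + exp (- c)).
  by apply is_derive_Reals; auto_derive; [done | simpl; field].
have [c [increment hc]] := MVT_cor2 _ _ 0 d d_gt0 (fun c _ => deriv c).
have := exp_ineq1 (- c) ltac:(lra).
rewrite Ropp_0 exp_0 in increment.
nra.
Qed.

(* d <= (1 + d) ln (1 + d): the upper-tail exponent
   d - (1 + d) ln (1 + d) is nonpositive. *)
Lemma le_mul_ln1p d : 0 < d -> d <= (1 + d) * ln (1 + d).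
Proof.
move=> d_gt0.
have := exp_ineq1_le (- ln (1 + d)).
rewrite exp_Ropp exp_ln; last lra.
have : (1 + d) * / (1 + d) = 1 by field; lra.
nra.
Qed.

Lemma Rpower_chernoff_upper d alpha :
  Rpower (exp d / Rpower (1 + d) (1 + d)) alpha
  = exp (alpha * (d - (1 + d) * ln (1 + d))).
Proof.
rewrite /Rpower /Rdiv -exp_Ropp -exp_plus ln_exp.
by congr exp; ring.
Qed.

Lemma Rltb_lt x y : Rltb x y -> x < y.
Proof. by rewrite /Rltb; case: Rlt_dec. Qed.

Lemma big_Rplus_le (T : finType) (F G : T -> R) :
  (forall t, F t <= G t) -> \big[Rplus/0]_t F t <= \big[Rplus/0]_t G t.
Proof.
by move=> FG; apply: (big_ind2 (fun x y => x <= y)) => //; [lra | move=> *; lra].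
Qed.

Lemma big_Rmult_le (T : finType) (F G : T -> R) :
  (forall t, 0 <= F t <= G t) -> \big[Rmult/1]_t F t <= \big[Rmult/1]_t G t.
Proof.
move=> FG; suff: 0 <= \big[Rmult/1]_t F t <= \big[Rmult/1]_t G t by case.
apply: (big_ind2 (fun x y => 0 <= x <= y)) => //; first lra.
move=> x1 x2 y1 y2 h1 h2; split; first nra.
by apply: Rmult_le_compat; lra.
Qed.

Lemma big_Rmult_slice {m n : nat} (i j : 'I_n) (F : 'I_m * 'I_n * 'I_n -> R)
    (H : 'I_m -> R) :
  (forall k, F (k, i, j) = H k) ->
  (forall t, ~~ ((t.1.2 == i) && (t.2 == j)) -> F t = 1) ->
  \big[Rmult/1]_t F t = \big[Rmult/1]_k H k.
Proof.
move=> on_slice off_slice.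
have -> : \big[Rmult/1]_t F t =
          \big[Rmult/1]_(ka : 'I_m * 'I_n) \big[Rmult/1]_(b : 'I_n) F (ka, b).
  by rewrite pair_big /=; apply: eq_bigr => -[ka b].
have -> : \big[Rmult/1]_(ka : 'I_m * 'I_n) \big[Rmult/1]_(b : 'I_n) F (ka, b) =
          \big[Rmult/1]_(k : 'I_m) \big[Rmult/1]_(a : 'I_n) \big[Rmult/1]_(b : 'I_n)
            F (k, a, b).
  by rewrite [RHS]pair_big /=; apply: eq_bigr => -[k a].
apply: eq_bigr => k _.
rewrite (bigD1 i) // [\big[_/_]_(_ | _ != _) _]big1 => [|a a_neq]; last first.
  by apply: big1 => b _; apply: off_slice; rewrite /= (negbTE a_neq).
rewrite (bigD1 j) // [\big[_/_]_(_ | _ != _) _]big1 => [|b b_neq]; last first.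
  by apply: off_slice; rewrite /= eqxx (negbTE b_neq).
by rewrite on_slice /= !Rmult_1_r.
Qed.

(* The coins of one column pair: the moment generating functions of the
   per-row emissions for (i, j) multiply, i.e. these emissions are
   independent Bernoulli(p_ij) choices under the product weight. *)
Lemma expect_prod_coins {m n : nat} (A : 'I_m -> 'I_n -> R) (gamma : R)
    (i j : 'I_n) (h : 'I_m -> bool -> R) :
  let p := pij A gamma i j in
  \big[Rplus/0]_(w : outcome m n)
     (weight A gamma w * \big[Rmult/1]_(k < m) h k (w (k, i, j)))
  = \big[Rmult/1]_(k < m) (p * h k true + (1 - p) * h k false).
Proof.
move=> p.
pose G (t : 'I_m * 'I_n * 'I_n) (b : bool) :=
  (if b then pij A gamma t.1.2 t.2 else 1 - pij A gamma t.1.2 t.2) *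
  (if (t.1.2 == i) && (t.2 == j) then h t.1.1 b else 1).
have weight_times_h w : weight A gamma w * \big[Rmult/1]_(k < m) h k (w (k, i, j))
                        = \big[Rmult/1]_t G t (w t).
  rewrite /G big_split /=; congr (_ * _); symmetry.
  apply: (big_Rmult_slice i j
            (fun t => if (t.1.2 == i) && (t.2 == j) then h t.1.1 (w t) else 1)).
    by move=> k /=; rewrite !eqxx.
  by move=> t /negbTE ->.
rewrite (eq_bigr _ (fun w _ => weight_times_h w)) -(bigA_distr_bigA G).
apply: (big_Rmult_slice i j) => [k | t off_slice]; rewrite big_bool /G /=.
  by rewrite !eqxx /p /=; ring.
by rewrite (negbTE off_slice) /=; ring.
Qed.

Section DimsumColumnPair.
Context {m n : nat} (A : 'I_m -> 'I_n -> R) (gamma : R).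
Hypothesis gamma_gt0 : 0 < gamma.
Hypothesis A01 : forall k a, 0 <= A k a <= 1.
Hypothesis nonzero_col : forall a : 'I_n, exists k : 'I_m, A k a <> 0.

Lemma colnorm_gt0 a : 0 < colnorm A a.
Proof.
rewrite /colnorm; apply: sqrt_lt_R0.
have [k Aka_neq0] := nonzero_col a.
rewrite (bigD1 k) //=.
set other_rows := \big[_/_]_(_ < _ | _) _.
have : 0 <= other_rows by apply: big_ind => //; [lra | move=> *; lra | move=> k0 _; nra].
have := Rsqr_pos_lt _ Aka_neq0; rewrite /Rsqr; lra.
Qed.

Lemma pij_gt0_le1 a b : 0 < pij A gamma a b <= 1.
Proof.
have ratio_gt0 : 0 < gamma / (colnorm A a * colnorm A b).
  by apply: Rdiv_lt_0_compat => //; apply: Rmult_lt_0_compat; exact: colnorm_gt0.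
by split; [apply: Rmin_glb_lt; lra | apply: Rmin_l].
Qed.

Lemma weight_ge0 w : 0 <= weight A gamma w.
Proof.
apply: big_ind => [| x y | t _]; [lra | exact: Rmult_le_pos |].
by have := pij_gt0_le1 t.1.2 t.2; case: (w t) => /=; lra.
Qed.

Lemma markov_exp (E : outcome m n -> bool) (S : outcome m n -> R) a t :
  (forall w, E w -> t * a <= t * S w) ->
  Pr A gamma E <= exp (- (t * a)) *
                  \big[Rplus/0]_w (weight A gamma w * exp (t * S w)).
Proof.
move=> on_E; rewrite /Pr big_mkcond big_distrr /=; apply: big_Rplus_le => w.
have := weight_ge0 w; have := exp_pos (- (t * a)); have := exp_pos (t * S w).
case: (boolP (E w)) => /= Ew; last by move=> *; apply: Rmult_le_pos; nra.
have := on_E w Ew; have := exp_ineq1_le (t * S w + - (t * a)).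
rewrite exp_plus; nra.
Qed.

Variables (i j : 'I_n).

Let p : R := pij A gamma i j.
Definition emitted (w : outcome m n) : R := \big[Rplus/0]_(k < m) Xv A w i j k.
Definition mean : R := p * gram A i j.

Lemma gram_ge0 : 0 <= gram A i j.
Proof.
apply: big_ind => [| x y | k _] /=; [lra | lra |].
by have := A01 k i; have := A01 k j; nra.
Qed.

(* Moment generating function of S: each row contributes
   1 + p x_k (e^t - 1) <= exp (p x_k (e^t - 1)) with x_k = a_ki a_kj in [0,1],
   and independence multiplies these, giving E[exp (t S)] <= exp (mu (e^t - 1)). *)
Lemma mgf_emitted_le t :
  \big[Rplus/0]_w (weight A gamma w * exp (t * emitted w))
  <= exp (mean * (exp t - 1)).
Proof.
have p_bounds : 0 < p <= 1 := pij_gt0_le1 i j.  (* the per-row bounds need 0 <= p <= 1 *)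
have exp_emitted w : exp (t * emitted w) =
    \big[Rmult/1]_(k < m) exp (t * (if w (k, i, j) then A k i * A k j else 0)).
  by rewrite /emitted big_distrr /=; exact: (big_morph exp exp_plus exp_0).
under eq_bigr do rewrite exp_emitted.
rewrite (expect_prod_coins A gamma i j
           (fun k b => exp (t * (if b then A k i * A k j else 0)))).
apply: (Rle_trans _ (\big[Rmult/1]_(k < m) exp (p * (A k i * A k j) * (exp t - 1)))).
  apply: big_Rmult_le => k /=; rewrite Rmult_0_r exp_0.
  have entry01 : 0 <= A k i * A k j <= 1.
    by have := A01 k i; have := A01 k j; split; nra.
  have := exp_pos (t * (A k i * A k j)); have := exp_le_chord t _ entry01.
  have := exp_ineq1_le (p * (A k i * A k j) * (exp t - 1)).
  rewrite -/p; split; nra.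
rewrite -(big_morph exp exp_plus exp_0) /mean /gram big_distrr big_distrl /=.
by right; congr exp; apply: eq_bigr => k _; ring.
Qed.

Lemma chernoff (E : outcome m n -> bool) a t :
  (forall w, E w -> t * a <= t * emitted w) ->
  Pr A gamma E <= exp (mean * (exp t - 1) - t * a).
Proof.
move=> on_E; apply: Rle_trans (markov_exp _ _ _ _ on_E) _.
rewrite /Rminus Rplus_comm exp_plus.
by apply: Rmult_le_compat_l; [left; exact: exp_pos | exact: mgf_emitted_le].
Qed.

Lemma emitted_upper_tail (E : outcome m n -> bool) d : 0 < d ->
  (forall w, E w -> (1 + d) * mean < emitted w) ->
  Pr A gamma E <= exp (mean * (d - (1 + d) * ln (1 + d))).
Proof.
move=> d_gt0 on_E.
have ln_gt0 : 0 < ln (1 + d) by have := le_mul_ln1p _ d_gt0; nra.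
apply: Rle_trans (chernoff E ((1 + d) * mean) (ln (1 + d)) _) _.
  by move=> w /on_E; nra.
by rewrite exp_ln; [right; congr exp; ring | lra].
Qed.

Lemma emitted_lower_tail (E : outcome m n -> bool) d : 0 < d < 1 -> 0 < mean ->
  (forall w, E w -> emitted w < (1 - d) * mean) ->
  Pr A gamma E < exp (- (mean * d ^ 2 / 2)).
Proof.
move=> d_bounds mean_gt0 on_E.
apply: Rle_lt_trans (chernoff E ((1 - d) * mean) (- d) _) _.
  by move=> w /on_E; nra.
apply: exp_increasing.
have := exp_opp_lt_taylor2 _ (proj1 d_bounds); nra.
Qed.

Lemma rescaled_output w :
  p * (colnorm A i * colnorm A j * dimsum_b A gamma w i j) = emitted w.
Proof.
have ci_gt0 := colnorm_gt0 i; have cj_gt0 := colnorm_gt0 j.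
rewrite /dimsum_b /p /pij -/(emitted w).
case: Rle_dec => [le_ratio1 | not_le_ratio1] /=.
  by rewrite Rmin_right //; field; repeat split; lra.
by rewrite Rmin_left; [field; split; lra | lra].
Qed.

Lemma rescaled_output_gt c w :
  Rltb (c * gram A i j) (colnorm A i * colnorm A j * dimsum_b A gamma w i j) ->
  c * mean < emitted w.
Proof.
move=> /Rltb_lt lt_c; rewrite -rescaled_output /mean.
have p_gt0 : 0 < p by case: (pij_gt0_le1 i j).
nra.
Qed.

Lemma rescaled_output_lt c w :
  Rltb (colnorm A i * colnorm A j * dimsum_b A gamma w i j) (c * gram A i j) ->
  emitted w < c * mean.
Proof.
move=> /Rltb_lt lt_c; rewrite -rescaled_output /mean.
have p_gt0 : 0 < p by case: (pij_gt0_le1 i j).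
nra.
Qed.

(* With p = 1 every emission for (i, j) happens almost surely, so S equals
   [A^T A]_ij with probability one. *)
Lemma Pr_full_sampling (E : outcome m n -> bool) :
  p = 1 -> (forall w, E w -> emitted w <> gram A i j) -> Pr A gamma E = 0.
Proof.
move=> p_eq1 on_E; rewrite /Pr; apply: big1 => w Ew.
case: (boolP [forall k, w (k, i, j)]) => [/forallP all_heads | /forallPn [k tails]].
  by case: (on_E w Ew); apply: eq_bigr => k _; rewrite /Xv all_heads.
rewrite /weight (bigD1 (k, i, j)) //= (negbTE tails) -/p p_eq1 /=; ring.
Qed.

(* Either p = 1, or p = gamma / (||c_i|| ||c_j||) and then
   mu = gamma cos(c_i, c_j) >= alpha. *)
Lemma full_sampling_or_mean_ge eps alpha :
  0 < eps -> alpha / eps <= gamma -> eps <= cosc A i j ->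
  p = 1 \/ alpha <= mean.
Proof.
move=> eps_gt0 gamma_ge cos_ge.
have ci_gt0 := colnorm_gt0 i; have cj_gt0 := colnorm_gt0 j.
have [ratio_le1 | /Rnot_le_lt ratio_gt1] :=
  Rle_dec (gamma / (colnorm A i * colnorm A j)) 1; last first.
  by left; rewrite /p /pij Rmin_left; lra.
right; rewrite /mean /p /pij Rmin_right //.
have -> : gamma / (colnorm A i * colnorm A j) * gram A i j = gamma * cosc A i j.
  by rewrite /cosc; field; split; lra.
have : alpha / eps * eps <= gamma * eps by apply: Rmult_le_compat_r; lra.
have -> : alpha / eps * eps = alpha by field; lra.
nra.
Qed.

End DimsumColumnPair.

Theorem theorem3 (m n : nat) (A : 'I_m -> 'I_n -> R) (eps alpha gamma : R)
  (hA01 : forall k i, 0 <= A k i <= 1)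
  (hcol : forall i : 'I_n, exists k : 'I_m, A k i <> 0)
  (heps : 0 < eps) (halpha : 0 < alpha) (hgamma : alpha / eps <= gamma)
  (i j : 'I_n) (hcos : eps <= cosc A i j) :
  (forall delta : R, 0 < delta ->
     Pr A gamma (fun w => Rltb ((1 + delta) * gram A i j)
                               (colnorm A i * colnorm A j * dimsum_b A gamma w i j))
     <= Rpower (exp delta / Rpower (1 + delta) (1 + delta)) alpha) /\
  (forall delta : R, 0 < delta < 1 ->
     Pr A gamma (fun w => Rltb (colnorm A i * colnorm A j * dimsum_b A gamma w i j)
                               ((1 - delta) * gram A i j))
     < exp (- (alpha * delta ^ 2 / 2))).
Proof.
have gamma_gt0 : 0 < gamma.
  by apply: Rlt_le_trans hgamma; apply: Rdiv_lt_0_compat.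
have gram_nonneg := gram_ge0 A hA01 i j.
have above c := rescaled_output_gt A gamma gamma_gt0 hcol i j c.
have below c := rescaled_output_lt A gamma gamma_gt0 hcol i j c.
have [p_eq1 | mean_ge] :=
  full_sampling_or_mean_ge A gamma gamma_gt0 hcol i j eps alpha heps hgamma hcos.
-
  have mean_eq : mean A gamma i j = gram A i j by rewrite /mean p_eq1 Rmult_1_l.
  split=> delta delta_bounds; rewrite (Pr_full_sampling A gamma i j) //.
  + by rewrite Rpower_chernoff_upper; left; exact: exp_pos.
  + by move=> w /above; rewrite mean_eq; nra.
  + exact: exp_pos.
  + by move=> w /below; rewrite mean_eq; nra.
- (* mu >= alpha: the Chernoff exponents only improve *)
  split=> delta delta_bounds.
  + rewrite Rpower_chernoff_upper.
    apply: Rle_trans.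
      apply: (emitted_upper_tail A gamma gamma_gt0 hA01 hcol i j _ _ delta_bounds).
      exact: above.
    by apply: exp_le_exp; have := le_mul_ln1p _ delta_bounds; nra.
  + apply: Rlt_le_trans.
      apply: (emitted_lower_tail A gamma gamma_gt0 hA01 hcol i j _ _ delta_bounds).
        lra.
      exact: below.
    by apply: exp_le_exp; nra.
Qed.
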